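(* Let $k$ be an algebraically closed field of characteristic zero and let $X\subset\mathbb P^n$ be a chain of closed subvarieties $X_1,\dots,X_\ell$ with saturated ideal $I_X=\bigcap_iI_{X_i}\subset k[x_0,\dots,x_n]$, such that for integers $n_0=0<n_1<\cdots<n_\ell=n$ one has $X_i\subset\{x_0=\cdots=x_{n_{i-1}-1}=0,\ x_{n_i+1}=\cdots=x_n=0\}$. Let $T_i=\langle x_{n_{i-1}},\dots,x_{n_i-1}\rangle\langle x_{n_i+1},\dots,x_n\rangle$ for $i=1,\dots,\ell-1$. Then for any monomial order $\prec$ on $k[x_0,\dots,x_n]$, \[ \mathrm{in}_\prec(I_X)=\sum_{i=1}^\ell\langle\mathrm{in}_\prec(I_{X_i}\cap k[x_{n_{i-1}},\dots,x_{n_i}])\rangle+\sum_{i=1}^{\ell-1}T_i=\sum_{i=1}^\ell\langle\mathrm{in}_\prec(I_X\cap k[x_{n_{i-1}},\dots,x_{n_i}])\rangle+\sum_{i=1}^{\ell-1}T_i, \] where each initial ideal $\mathrm{in}_\prec(J\cap k[x_{n_{i-1}},\dots,x_{n_i}])$ is computed in $k[x_{n_{i-1}},\dots,x_{n_i}]$ with the restricted order and $\langle\cdot\rangle$ denotes the generated ideal in $k[x_0,\dots,x_n]$.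
   Context: A chain of subvarieties means $X=\bigcup_iX_i$ and $X_i\cap X_j\neq\emptyset$ iff $|i-j|=1$; $I_{X_i}$ is the saturated homogeneous ideal of $X_i$. *)

From HB Require Import structures.
From mathcomp Require Import all_boot all_order all_algebra.
From mathcomp Require Import mpoly.
Set Implicit Arguments. Unset Strict Implicit. Unset Printing Implicit Defensive.
Import Order.TTheory GRing.Theory.
Local Open Scope ring_scope.

Section Defs.
Variables (k : fieldType) (n : nat).
(* polynomial ring k[x_0,...,x_n] : {mpoly k[n.+1]}, variable x_j = 'X_j, j : 'I_(n.+1) *)
Notation Poly := {mpoly k[n.+1]}.
Notation Mon := 'X_{1..n.+1}.
(* points of k^{n+1}; a subset of P^n is represented by its affine cone *)
Notation Pt := ('I_(n.+1) -> k).

Definition pt_nonzero (v : Pt) : Prop := exists j, v j != 0.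

Definition homogeneous (f : Poly) : Prop :=
  exists d, forall m, m \in msupp f -> mdeg m = d.

Definition proj_closed (X : Pt -> Prop) : Prop :=
  exists S : Poly -> Prop, (forall f, S f -> homogeneous f) /\
    forall v, X v <-> (pt_nonzero v /\ forall f, S f -> f.@[v] = 0).

Definition proj_variety (X : Pt -> Prop) : Prop :=
  proj_closed X /\ (exists v, X v) /\
  forall Y Z, proj_closed Y -> proj_closed Z ->
    (forall v, X v <-> (Y v \/ Z v)) ->
    (forall v, X v -> Y v) \/ (forall v, X v -> Z v).

(* saturated homogeneous ideal of X: all polynomials vanishing on X *)
Definition vanishing_ideal (X : Pt -> Prop) : Poly -> Prop :=
  fun f => forall v, X v -> f.@[v] = 0.

Definition gen_ideal_in (P : Poly -> Prop) (S : Poly -> Prop) : Poly -> Prop :=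
  fun f => exists r (g h : nat -> Poly),
    (forall i, (i < r)%N -> P (g i) /\ S (h i)) /\ f = \sum_(i < r) g i * h i.

Definition whole (f : Poly) : Prop := True.

Definition gen_ideal (S : Poly -> Prop) : Poly -> Prop := gen_ideal_in whole S.

Definition monomial_order (lt : rel Mon) : Prop :=
  [/\ (forall m, ~~ lt m m),
      (forall m1 m2 m3, lt m1 m2 -> lt m2 m3 -> lt m1 m3),
      (forall m1 m2, m1 != m2 -> lt m1 m2 || lt m2 m1),
      (forall m1 m2 p, lt m1 m2 -> lt (m1 + p)%MM (m2 + p)%MM) &
      (forall m, m != 0%MM -> lt 0%MM m)].

Definition is_lead (lt : rel Mon) (f : Poly) (m : Mon) : Prop :=
  m \in msupp f /\ forall m', m' \in msupp f -> m' != m -> lt m' m.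

Definition in_vars (a b : nat) (f : Poly) : Prop :=
  forall m, m \in msupp f -> forall j : 'I_(n.+1), (m j != 0)%N -> (a <= j <= b)%N.

(* in_lt(J ∩ k[x_a..x_b]), computed in k[x_a..x_b] with the restricted order:
   the ideal of the subring generated by leading monomials of nonzero elements *)
Definition initial_sub (lt : rel Mon) (J : Poly -> Prop) (a b : nat) : Poly -> Prop :=
  gen_ideal_in (in_vars a b)
    (fun p => exists f m, [/\ J f, in_vars a b f, f != 0, is_lead lt f m & p = 'X_[m]]).

Definition initial_ideal (lt : rel Mon) (J : Poly -> Prop) : Poly -> Prop :=
  gen_ideal (fun p => exists f m, [/\ J f, f != 0, is_lead lt f m & p = 'X_[m]]).

Definition var_ideal (a b : nat) : Poly -> Prop :=
  gen_ideal (fun p => exists j : 'I_(n.+1), (a <= j <= b)%N /\ p = 'X_j).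

Definition ideal_add (I J : Poly -> Prop) : Poly -> Prop :=
  fun f => exists g h, I g /\ J h /\ f = g + h.

Definition ideal_mul (I J : Poly -> Prop) : Poly -> Prop :=
  gen_ideal (fun f => exists g h, I g /\ J h /\ f = g * h).

(* sum of ideals I lo + ... + I (hi-1) (the zero ideal if the range is empty) *)
Definition ideal_sum (I : nat -> Poly -> Prop) (lo hi : nat) : Poly -> Prop :=
  fun f => exists g : nat -> Poly,
    (forall i, (lo <= i < hi)%N -> I i (g i)) /\ f = \sum_(lo <= i < hi) g i.

Definition same_ideal (I J : Poly -> Prop) : Prop := forall f, I f <-> J f.
End Defs.

From HB Require Import structures.
From mathcomp Require Import all_boot all_order all_algebra.
From mathcomp Require Import mpoly.
From mathcomp Require Import zify.
Import GRing.Theory.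
Local Open Scope ring_scope.
Set Implicit Arguments. Unset Strict Implicit. Unset Printing Implicit Defensive.

(* Write [c_i = x_(n_i)] for the only variable shared by the blocks of [X_i]
   and [X_(i+1)]. As [X_i ∩ X_(i+1)] is a nonempty cone inside the [c_i]-axis,
   that whole axis lies in [X], so no [f] in [I_X] has a pure power of [c_i] in
   its support. Every monomial either lies in some [T_i], and then vanishes on
   [X], or involves the variables of a single block. A monomial lying in two
   blocks is a pure power of some [c_i], so on [X_j] all monomials of [f] outside
   block [j] vanish: the block-[j] part of [f] lies in [I_(X_j)], and the leading
   monomial of [f] is in some [T_i] or leads an element of
   [I_(X_j) ∩ k[block j]]. The same observation shows that each element of
   [I_(X_j) ∩ k[block j]] vanishes on all of [X], which gives the reverse
   inclusions. *)

Section Ideals.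
Variables (k : fieldType) (n : nat).
Local Notation Poly := {mpoly k[n.+1]}.

Definition is_ideal (I : Poly -> Prop) :=
  [/\ I 0, (forall a b, I a -> I b -> I (a + b)) & (forall c a, I a -> I (c * a))].

Lemma gen_ideal_in_min P S (I : Poly -> Prop) : is_ideal I -> (forall s, S s -> I s) ->
  forall f, gen_ideal_in P S f -> I f.
Proof.
move=> [I0 ID IM] SI f [r [g [h [gh ->]]]].
elim/big_ind: _ => // i _; apply: IM; apply: SI; exact: (gh i (ltn_ord i)).2.
Qed.

Lemma gen_ideal_in_gen P S (s : Poly) : P 1 -> S s -> gen_ideal_in P S s.
Proof.
move=> P1 Ss; exists 1%N, (fun _ => 1), (fun _ => s); split => //.
by rewrite big_ord1 mul1r.
Qed.

Lemma gen_ideal_gen S (s : Poly) : S s -> gen_ideal S s.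
Proof. exact: gen_ideal_in_gen. Qed.

Lemma gen_ideal_in_monotone P (S S' : Poly -> Prop) : (forall s, S s -> S' s) ->
  forall f, gen_ideal_in P S f -> gen_ideal_in P S' f.
Proof.
move=> SS' f [r [g [h [gh ->]]]]; exists r, g, h; split => // i ir.
by have [Pg Sh] := gh i ir; split; last exact: SS'.
Qed.

Lemma gen_ideal_is_ideal (S : Poly -> Prop) : is_ideal (gen_ideal S).
Proof.
split.
- by exists 0%N, (fun _ => 0), (fun _ => 0); split; rewrite // big_ord0.
- move=> _ _ [r1 [g1 [h1 [gh1 ->]]]] [r2 [g2 [h2 [gh2 ->]]]].
  exists (r1 + r2)%N, (fun i => if (i < r1)%N then g1 i else g2 (i - r1)%N),
    (fun i => if (i < r1)%N then h1 i else h2 (i - r1)%N); split.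
    move=> i ir; case: ifP => ir1; first exact: gh1.
    by apply: gh2; rewrite ltn_subLR // leqNgt ir1.
  rewrite big_split_ord /=; congr (_ + _); apply: eq_bigr => i _.
    by rewrite /= ltn_ord.
  by rewrite /= ltnNge leq_addr /= addKn.
- move=> c _ [r [g [h [gh ->]]]]; exists r, (fun i => c * g i), h; split => //.
  by rewrite mulr_sumr; apply: eq_bigr => i _; rewrite mulrA.
Qed.

Lemma gen_ideal0 (S : Poly -> Prop) : gen_ideal S 0.
Proof. by case: (gen_ideal_is_ideal S). Qed.

Lemma ideal_mul_gen_min (A B I : Poly -> Prop) : is_ideal I ->
  (forall a b, A a -> B b -> I (a * b)) ->
  forall f, ideal_mul (gen_ideal A) (gen_ideal B) f -> I f.
Proof.
move=> idI AB_I; apply: gen_ideal_in_min => // _ [g [h [Ag [Bh ->]]]].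
have [I0 ID IM] := idI.
have mulr_ideal x : is_ideal (fun y => I (y * x)).
  split; [by rewrite mul0r | by move=> a b Ia Ib; rewrite mulrDl; apply: ID |].
  by move=> c a Ia; rewrite -mulrA; apply: IM.
have mull_ideal x : is_ideal (fun y => I (x * y)).
  split; [by rewrite mulr0 | by move=> a b Ia Ib; rewrite mulrDr; apply: ID |].
  by move=> c a Ia; rewrite mulrCA; apply: IM.
move: g Ag; apply: gen_ideal_in_min (mulr_ideal h) _ => a Aa.
move: h Bh; apply: gen_ideal_in_min (mull_ideal a) _ => b Bb.
exact: AB_I.
Qed.

Lemma ideal_sum_is_ideal (J : nat -> Poly -> Prop) lo hi :
  (forall i, (lo <= i < hi)%N -> is_ideal (J i)) -> is_ideal (ideal_sum J lo hi).
Proof.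
move=> idJ; split.
- exists (fun _ => 0); split; last by rewrite big1.
  by move=> i ih; case: (idJ i ih).
- move=> _ _ [g1 [Jg1 ->]] [g2 [Jg2 ->]]; exists (fun i => g1 i + g2 i).
  split; last by rewrite big_split.
  by move=> i ih; case: (idJ i ih) => _ JD _; apply: JD; [apply: Jg1 | apply: Jg2].
- move=> c _ [g [Jg ->]]; exists (fun i => c * g i); split; last by rewrite mulr_sumr.
  by move=> i ih; case: (idJ i ih) => _ _ JM; apply: JM; apply: Jg.
Qed.

Lemma ideal_sum0 (J : nat -> Poly -> Prop) lo hi :
  (forall i, (lo <= i < hi)%N -> J i 0) -> ideal_sum J lo hi 0.
Proof. by move=> J0; exists (fun _ => 0); rewrite big1. Qed.

Lemma ideal_sum_component (J : nat -> Poly -> Prop) lo hi i0 f :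
  (forall i, (lo <= i < hi)%N -> J i 0) -> (lo <= i0 < hi)%N -> J i0 f ->
  ideal_sum J lo hi f.
Proof.
move=> J0 i0h Jf; exists (fun i => if i == i0 then f else 0); split.
  by move=> i ih; case: eqP => [->|_] //; apply: J0.
rewrite (bigD1_seq i0) ?mem_index_iota ?iota_uniq //= eqxx big1 ?addr0 //.
by move=> i /negbTE ->.
Qed.

Lemma ideal_sum_min (J : nat -> Poly -> Prop) lo hi (I : Poly -> Prop) : is_ideal I ->
  (forall i, (lo <= i < hi)%N -> forall f, J i f -> I f) ->
  forall f, ideal_sum J lo hi f -> I f.
Proof.
move=> [I0 ID _] JI _ [g [Jg ->]]; rewrite big_seq; elim/big_ind: _ => // i.
by rewrite mem_index_iota => ih; exact: JI (Jg i ih).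
Qed.

Lemma ideal_add_is_ideal (I J : Poly -> Prop) :
  is_ideal I -> is_ideal J -> is_ideal (ideal_add I J).
Proof.
move=> [I0 ID IM] [J0 JD JM]; split.
- by exists 0, 0; rewrite addr0.
- move=> _ _ [g1 [h1 [Ig1 [Jh1 ->]]]] [g2 [h2 [Ig2 [Jh2 ->]]]].
  by exists (g1 + g2), (h1 + h2); rewrite addrACA; split; [apply: ID | split; first apply: JD].
- by move=> c _ [g [h [Ig [Jh ->]]]]; exists (c * g), (c * h); rewrite mulrDr; split; auto.
Qed.

Lemma ideal_addl (I J : Poly -> Prop) f : J 0 -> I f -> ideal_add I J f.
Proof. by move=> J0 If; exists f, 0; rewrite addr0. Qed.

Lemma ideal_addr (I J : Poly -> Prop) f : I 0 -> J f -> ideal_add I J f.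
Proof. by move=> I0 Jf; exists 0, f; rewrite add0r. Qed.

End Ideals.

Section Monomials.
Variables (k : fieldType) (n : nat).
Local Notation Poly := {mpoly k[n.+1]}.
Local Notation Mon := 'X_{1..n.+1}.
Local Notation Pt := ('I_(n.+1) -> k).

Definition mfilter (S : pred Mon) (f : Poly) : Poly :=
  \sum_(m <- msupp f | S m) f@_m *: 'X_[m].

Lemma mcoeff_mfilter S f m : (mfilter S f)@_m = if S m then f@_m else 0.
Proof.
rewrite /mfilter raddf_sum /= big_mkcond /=.
under eq_bigr => m' _ do rewrite mcoeffZ mcoeffX.
have [fm|fm] := boolP (m \in msupp f).
  rewrite (bigD1_seq m) ?msupp_uniq //= big1 ?addr0.
    by case: (S m); rewrite /= ?eqxx ?mulr1.
  by move=> m' /negbTE m'm; case: (S m'); rewrite // m'm mulr0.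
rewrite big_seq big1; first by case: (S m) => //; apply/esym/eqP; rewrite mcoeff_eq0.
move=> m' fm'; case: (S m') => //; case: eqP => [m'm|]; last by rewrite mulr0.
by rewrite m'm (negbTE fm) in fm'.
Qed.

Lemma msupp_mfilter S f m : (m \in msupp (mfilter S f)) = S m && (m \in msupp f).
Proof. by rewrite !mcoeff_msupp mcoeff_mfilter; case: (S m); rewrite ?eqxx. Qed.

Lemma meval_mfilter S f (v : Pt) :
  (forall m, m \in msupp f -> ~~ S m -> \prod_i v i ^+ m i = 0) ->
  (mfilter S f).@[v] = f.@[v].
Proof.
move=> offS; rewrite /mfilter raddf_sum mevalE [in RHS](bigID S) /=.
rewrite [X in _ = _ + X]big1_seq ?addr0 => [|m /andP [Sm fm]]; last first.
  by rewrite offS ?mulr0.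
by apply: eq_bigr => m _; rewrite mevalZ mevalX.
Qed.

Lemma lead_mpolyX (lt : rel Mon) m : is_lead lt ('X_[m] : Poly) m.
Proof.
split; first by rewrite msuppX mem_seq1.
by move=> m'; rewrite msuppX mem_seq1 => /eqP ->; rewrite eqxx.
Qed.

Lemma mpolyX_neq0 m : ('X_[m] : Poly) != 0.
Proof. by rewrite -msupp_eq0 msuppX. Qed.

Lemma in_vars1 a b : in_vars a b (1 : Poly).
Proof. by move=> m; rewrite msupp1 mem_seq1 => /eqP -> x; rewrite mnm0E eqxx. Qed.

Lemma mono_eval_eq0 (v : Pt) (m : Mon) x : m x != 0%N -> v x = 0 ->
  \prod_i v i ^+ m i = 0.
Proof. by move=> mx vx; rewrite (bigD1 x) //= vx expr0n (negbTE mx) mul0r. Qed.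

Lemma mono_eval_supp_neq0 (v : Pt) (m : Mon) x : \prod_i v i ^+ m i != 0 ->
  m x != 0%N -> v x != 0.
Proof. by move=> vm mx; apply: contraNneq vm => /(mono_eval_eq0 mx) ->. Qed.

Definition axis_pt (c : 'I_(n.+1)) (t : k) : Pt := fun x => if x == c then t else 0.

Definition pure_power (c : 'I_(n.+1)) (m : Mon) := [forall x, (m x != 0%N) ==> (x == c)].

Lemma mono_eval_axis c t (m : Mon) :
  \prod_i axis_pt c t i ^+ m i = if pure_power c m then t ^+ m c else 0.
Proof.
case: ifP => [/forallP mc|].
  rewrite (bigD1 c) //= /axis_pt eqxx big1 ?mulr1 // => x /negbTE xc.
  by move: (mc x); rewrite xc implybF negbK => /eqP ->.
move/negbT; rewrite negb_forall => /existsP [x]; rewrite negb_imply => /andP [mx xc].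
by apply: (mono_eval_eq0 mx); rewrite /axis_pt (negbTE xc).
Qed.

Lemma meval_homog_scale (f : Poly) (v : Pt) (s : k) :
  homogeneous f -> f.@[v] = 0 -> f.@[fun x => s * v x] = 0.
Proof.
move=> [d fd] fv.
suff -> : f.@[fun x => s * v x] = s ^+ d * f.@[v] by rewrite fv mulr0.
rewrite !mevalE mulr_sumr big_seq [RHS]big_seq; apply: eq_bigr => m fm.
under eq_bigr => i _ do rewrite exprMn.
rewrite big_split /= -(fd m fm) mdegE mulrCA; congr (_ * (_ * _)).
by elim/big_rec2: _ => [|i a b _ ->]; rewrite ?expr0 // exprD.
Qed.

End Monomials.

Lemma poly_eq0_on_units (k : closedFieldType) (p : {poly k}) :
  (forall t, t != 0 -> p.[t] = 0) -> p = 0.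
Proof.
move=> p0; apply/eqP; apply: contraT => pn0.
have : size (p * 'X - 1) != 1%N.
  rewrite size_polyDl size_mulX // ?eqSS ?size_poly_eq0 //.
  by rewrite size_polyN size_poly1 ltnS lt0n size_poly_eq0.
case/closed_rootP => x; rewrite /root !hornerE.
have [->|x0] := eqVneq x 0; first by rewrite mulr0 sub0r oppr_eq0 oner_eq0.
by rewrite p0 // mul0r sub0r oppr_eq0 oner_eq0.
Qed.

(* On the [c]-axis [g] restricts to the one-variable polynomial [p] formed by
   its pure powers of [x_c]. *)
Lemma axis_vanish_no_pure_power (k : closedFieldType) n (g : {mpoly k[n.+1]}) c :
  (forall t : k, t != 0 -> g.@[axis_pt c t] = 0) ->
  forall m, m \in msupp g -> ~~ pure_power c m.
Proof.
move=> g0 m0 gm0; apply/negP => pm0.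
pose p : {poly k} := \sum_(m <- msupp g) (if pure_power c m then g@_m *: 'X^(m c) else 0).
have p0 : p = 0.
  apply: poly_eq0_on_units => t t0; rewrite -(g0 t t0) horner_sum mevalE.
  apply: eq_bigr => m _; rewrite mono_eval_axis.
  by case: (pure_power c m); rewrite ?horner0 ?mulr0 // hornerZ hornerXn.
have : p`_(m0 c) = g@_m0.
  rewrite coef_sum (bigD1_seq m0) ?msupp_uniq //= pm0 coefZ coefXn eqxx mulr1.
  rewrite big1 ?addr0 // => m mm0; case: ifP => pm; last by rewrite coef0.
  rewrite coefZ coefXn; case: eqP => [mc|]; last by rewrite mulr0.
  case/eqP: mm0; apply/mnmP => x; have [->//|xc] := eqVneq x c.
  have off_c (m' : 'X_{1..n.+1}) : pure_power c m' -> m' x = 0%N.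
    by move/forallP/(_ x); rewrite (negbTE xc) implybF negbK => /eqP.
  by rewrite !off_c.
by rewrite p0 coef0 => /esym/eqP; rewrite mcoeff_eq0 gm0.
Qed.

Section Chain.
Variables (k : closedFieldType) (n l : nat) (nn : nat -> nat)
  (X : nat -> ('I_(n.+1) -> k) -> Prop).
Local Notation Poly := {mpoly k[n.+1]}.
Local Notation Mon := 'X_{1..n.+1}.
Hypothesis l_gt0 : (0 < l)%N.
Hypothesis nn0 : nn 0%N = 0%N.
Hypothesis nn_incr : forall i, (i < l)%N -> (nn i < nn i.+1)%N.
Hypothesis nnl : nn l = n.
Hypothesis X_variety : forall i, (1 <= i <= l)%N -> proj_variety (X i).
Hypothesis X_chain : forall i j, (1 <= i <= l)%N -> (1 <= j <= l)%N -> i <> j ->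
  ((exists v, X i v /\ X j v) <-> (i = j.+1 \/ j = i.+1)).
Hypothesis X_support : forall i, (1 <= i <= l)%N -> forall v, X i v ->
  forall x : 'I_(n.+1), ((x < nn i.-1)%N \/ (nn i < x)%N) -> v x = 0.

Lemma nn_ltn i j : (i < j)%N -> (j <= l)%N -> (nn i < nn j)%N.
Proof.
elim: j => // j IHj; rewrite ltnS leq_eqVlt => /orP [/eqP -> | ij] jl.
  exact: nn_incr.
exact: ltn_trans (IHj ij (ltnW jl)) (nn_incr jl).
Qed.

Lemma nn_ltn_mono i j : (i <= l)%N -> (j <= l)%N -> (nn i < nn j)%N = (i < j)%N.
Proof.
move=> il jl; apply/idP/idP => [|/nn_ltn]; last exact.
apply: contraLR; rewrite -!leqNgt leq_eqVlt => /orP [/eqP -> // | ji].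
exact/ltnW/nn_ltn.
Qed.

Lemma nn_leq_mono i j : (i <= l)%N -> (j <= l)%N -> (nn i <= nn j)%N = (i <= j)%N.
Proof. by move=> il jl; rewrite leqNgt nn_ltn_mono // -leqNgt. Qed.

Lemma nn_leq_n i : (i <= l)%N -> (nn i <= n)%N.
Proof. by move=> il; rewrite -nnl nn_leq_mono. Qed.

Lemma point_support i v x : (1 <= i <= l)%N -> X i v -> v x != 0 ->
  (nn i.-1 <= x <= nn i)%N.
Proof.
move=> il Xv; apply: contraTT; rewrite negbK negb_and -!ltnNge => out.
by apply/eqP/(X_support il Xv); case/orP: out; [left | right].
Qed.

Definition mono_in_block j (m : Mon) :=
  [forall x : 'I_(n.+1), (m x != 0%N) ==> (nn j.-1 <= x <= nn j)%N].

Lemma mono_in_blockP j (m : Mon) :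
  reflect (forall x : 'I_(n.+1), m x != 0%N -> (nn j.-1 <= x <= nn j)%N)
          (mono_in_block j m).
Proof. by apply: (iffP forallP) => mj x; apply/implyP; apply: mj. Qed.

Lemma point_mono_in_block i v (m : Mon) : (1 <= i <= l)%N -> X i v ->
  \prod_x v x ^+ m x != 0 -> mono_in_block i m.
Proof.
move=> il Xv vm; apply/mono_in_blockP => x mx.
exact/(point_support il Xv)/(mono_eval_supp_neq0 vm).
Qed.

Lemma variety_scale i v w s : (1 <= i <= l)%N -> X i v -> s != 0 ->
  (forall x, w x = s * v x) -> X i w.
Proof.
move=> il Xv s0 wv; have [[S [S_homog XS]] _] := X_variety il.
have [[j vj] vS] := (XS v).1 Xv.
apply/XS; split; first by exists j; rewrite wv mulf_neq0.
move=> f Sf; have -> : f.@[w] = f.@[fun x => s * v x] by apply: meval_eq.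
exact: meval_homog_scale (S_homog f Sf) (vS f Sf).
Qed.

Definition joint_var i : 'I_(n.+1) := inord (nn i).

Lemma joint_var_val i : (i <= l)%N -> joint_var i = nn i :> nat.
Proof. by move=> il; rewrite /joint_var inordK // ltnS nn_leq_n. Qed.

(* [X i] and [X i.+1] meet inside the [x_(nn i)]-axis, and varieties are cones. *)
Lemma axis_in_meet i t : (1 <= i < l)%N -> t != 0 ->
  X i (axis_pt (joint_var i) t) /\ X i.+1 (axis_pt (joint_var i) t).
Proof.
move=> /andP [i1 ilt] t0.
have il : (1 <= i <= l)%N by rewrite i1 ltnW.
have i'l : (1 <= i.+1 <= l)%N by rewrite ilt.
have [v [Xv Xv']] : exists v, X i v /\ X i.+1 v.
  by apply/(X_chain il i'l); [move/eqP; rewrite ltn_eqF | right].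
have v_off x : x != joint_var i -> v x = 0.
  move=> xc; case: (ltngtP x (nn i)) => [xi|ix|xi].
  - by apply: (X_support i'l Xv'); left.
  - by apply: (X_support il Xv); right.
  - by move: xc; rewrite -(inj_eq val_inj) /= joint_var_val ?xi ?eqxx // ltnW.
have vc : v (joint_var i) != 0.
  have [[S [_ XS]] _] := X_variety il; have [[j vj] _] := (XS v).1 Xv.
  by have [<- // | /v_off vj0] := eqVneq j (joint_var i); rewrite vj0 eqxx in vj.
have axis_v x : axis_pt (joint_var i) t x = t / v (joint_var i) * v x.
  rewrite /axis_pt; case: eqP => [-> | /eqP xc]; first by rewrite divfK.
  by rewrite (v_off x xc) mulr0.
have s0 : t / v (joint_var i) != 0 by rewrite mulf_neq0 // invr_eq0.
by split; apply: variety_scale axis_v.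
Qed.

Definition chain_union v := exists2 i, (1 <= i <= l)%N & X i v.
Definition chain_ideal := vanishing_ideal chain_union.

Lemma chain_ideal_no_pure_power f i m : chain_ideal f -> (1 <= i < l)%N ->
  m \in msupp f -> ~~ pure_power (joint_var i) m.
Proof.
move=> If il; apply: axis_vanish_no_pure_power => t t0; apply: If.
by exists i; [case/andP: il => -> /ltnW | exact: (axis_in_meet il t0).1].
Qed.

Lemma pure_power_joint i (m : Mon) : (i <= l)%N ->
  (forall x : 'I_(n.+1), m x != 0%N -> (nn i <= x <= nn i)%N) ->
  pure_power (joint_var i) m.
Proof.
move=> il mi; apply/forallP => x; apply/implyP => /mi xi.
by rewrite -(inj_eq val_inj) /= joint_var_val // eqn_leq andbC.
Qed.

Lemma mono_in_two_blocks j j' m : (1 <= j <= l)%N -> (1 <= j' <= l)%N -> j != j' ->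
  mono_in_block j m -> mono_in_block j' m ->
  exists i, [/\ (1 <= i < l)%N, pure_power (joint_var i) m & (i = j \/ i.+1 = j)].
Proof.
move=> jl j'l jj' /mono_in_blockP mj /mono_in_blockP mj'.
case: (ltngtP j j') => [jltj' | j'ltj | jeq]; last by rewrite jeq eqxx in jj'.
- exists j; split; [lia | | by left].
  apply: pure_power_joint; first lia.
  move=> x /[dup] /mj /andP [_ xj] /mj' /andP [j'x _].
  by rewrite xj andbT (leq_trans _ j'x) // nn_leq_mono; lia.
- exists j.-1; split; [lia | | by right; lia].
  apply: pure_power_joint; first lia.
  move=> x /[dup] /mj /andP [jx _] /mj' /andP [_ xj'].
  by rewrite jx (leq_trans xj') // nn_leq_mono; lia.
Qed.

(* [m] is divisible by some generator [x_a * x_b] of [T i], [1 <= i < l]. *)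
Definition mono_in_T (m : Mon) :=
  [exists i : 'I_l, exists a : 'I_(n.+1), exists b : 'I_(n.+1),
    [&& (0 < i)%N, (nn i.-1 <= a)%N, (a < nn i)%N, (nn i < b)%N, m a != 0%N & m b != 0%N]].

Lemma T_pair_point_eq0 i (a b : 'I_(n.+1)) j v : (1 <= i < l)%N ->
  (nn i.-1 <= a < nn i)%N -> (nn i < b)%N -> (1 <= j <= l)%N -> X j v ->
  v a = 0 \/ v b = 0.
Proof.
move=> il /andP [ia ai] ib jl Xv.
have [va | va] := eqVneq (v a) 0; first by left.
have [vb | vb] := eqVneq (v b) 0; first by right.
have /andP [ja _] := point_support jl Xv va.
have /andP [_ bj] := point_support jl Xv vb.
have : (j.-1 < i)%N by rewrite -nn_ltn_mono ?(leq_ltn_trans ja ai) //; lia.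
have : (i < j)%N by rewrite -nn_ltn_mono ?(leq_trans ib bj) //; lia.
lia.
Qed.

Lemma T_mono_eval_eq0 m j v : mono_in_T m -> (1 <= j <= l)%N -> X j v ->
  \prod_x v x ^+ m x = 0.
Proof.
move=> /existsP [i /existsP [a /existsP [b /and5P [i0 ia ai ib /andP [ma mb]]]]] jl Xv.
have il : (1 <= i < l)%N by rewrite i0 ltn_ord.
have ai' : (nn i.-1 <= a < nn i)%N by rewrite ia.
have [va | vb] := T_pair_point_eq0 il ai' ib jl Xv.
  exact: mono_eval_eq0 ma va.
exact: mono_eval_eq0 mb vb.
Qed.

Lemma block_index a : (a < n)%N -> exists2 i, (1 <= i <= l)%N & (nn i.-1 <= a < nn i)%N.
Proof.
move=> an; have : exists i, (a < nn i)%N by exists l; rewrite nnl.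
case/ex_minnP => i ai imin.
have il : (i <= l)%N by apply: imin; rewrite nnl.
have i1 : (1 <= i)%N by move: ai; case: (i) => //; rewrite nn0.
exists i; first by rewrite i1.
by rewrite ai andbT leqNgt; apply/negP => /imin; lia.
Qed.

Lemma mono_in_some_block m : ~~ mono_in_T m ->
  exists2 j, (1 <= j <= l)%N & mono_in_block j m.
Proof.
move=> notT; have [/forallP m0 | ] := boolP [forall x, m x == 0%N].
  by exists 1%N; [rewrite leqnn l_gt0 | apply/mono_in_blockP => x; rewrite m0].
rewrite negb_forall => /existsP [x0 mx0].
have [a ma amin] := @arg_minnP _ x0 (fun x => m x != 0%N) (@nat_of_ord _) mx0.
have [an | na] := ltnP a n; last first.
  exists l; first by rewrite l_gt0 leqnn.
  apply/mono_in_blockP => x /amin ax; have := ltn_ord x.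
  by have := nn_leq_n (leq_pred l); rewrite nnl; lia.
have [i il /andP [ia ai]] := block_index an.
exists i => //; apply/mono_in_blockP => x mx.
rewrite (leq_trans ia (amin x mx)) /= leqNgt; apply/negP => ix.
have xn := ltn_ord x.
have ilt : (i < l)%N by rewrite -nn_ltn_mono ?nnl; lia.
move/negP: notT; apply; apply/existsP; exists (Ordinal ilt).
apply/existsP; exists a; apply/existsP; exists x.
by rewrite /= ia ai ix ma mx !andbT; case/andP: il.
Qed.

(* Constant monomials lie in every block; [block_of] picks the first one. *)
Definition block_of (m : Mon) := (find (mono_in_block^~ m) (iota 1 l)).+1.

Lemma block_ofP m : ~~ mono_in_T m -> (1 <= block_of m <= l)%N /\ mono_in_block (block_of m) m.
Proof.
move=> /mono_in_some_block [j jl mj].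
have hasj : has (mono_in_block^~ m) (iota 1 l).
  by apply/hasP; exists j => //; rewrite mem_iota; lia.
have := hasj; rewrite has_find size_iota => findl.
split; first by rewrite /block_of; lia.
by move: (nth_find 0 hasj); rewrite nth_iota // add1n.
Qed.

(* At a point of [X i], [i != j], the only monomials of [g] that survive are
   pure powers of a joint variable of [X j], and [g] has none. *)
Lemma block_ideal_sub_chain j : (1 <= j <= l)%N ->
  forall g, vanishing_ideal (X j) g -> in_vars (nn j.-1) (nn j) g -> chain_ideal g.
Proof.
move=> jl g Xg gj v [i il Xv].
case: (eqVneq i j) Xv => [-> /Xg // | ij Xv].
rewrite mevalE big_seq big1 // => m gm.
have [-> | vm] := eqVneq (\prod_x v x ^+ m x) 0; first by rewrite mulr0.
have mj : mono_in_block j m by apply/mono_in_blockP; exact: gj.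
have [i' [i'l pm ji']] :=
  mono_in_two_blocks jl il (contra_neq esym ij) mj (point_mono_in_block il Xv vm).
suff : ~~ pure_power (joint_var i') m by rewrite pm.
apply: (axis_vanish_no_pure_power _ gm) => t t0; apply: Xg.
by case: ji' => <-; [exact: (axis_in_meet i'l t0).1 | exact: (axis_in_meet i'l t0).2].
Qed.

Definition block_part j (f : Poly) :=
  mfilter (fun m => ~~ mono_in_T m && (block_of m == j)) f.

Lemma block_part_vanishing j f : chain_ideal f -> (1 <= j <= l)%N ->
  vanishing_ideal (X j) (block_part j f).
Proof.
move=> If jl v Xv; rewrite meval_mfilter; first by apply: If; exists j.
move=> m fm; rewrite /= negb_and negbK.
have [mT _ | notT /= mj] := boolP (mono_in_T m); first exact: T_mono_eval_eq0 mT jl Xv.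
have [// | vm] := eqVneq (\prod_x v x ^+ m x) 0.
have [bl bm] := block_ofP notT.
have [i [il pm _]] := mono_in_two_blocks bl jl mj bm (point_mono_in_block jl Xv vm).
by rewrite (negbTE (chain_ideal_no_pure_power If il fm)) in pm.
Qed.

Definition T_ideal i : Poly -> Prop :=
  ideal_mul (@var_ideal k n (nn i.-1) (nn i).-1) (@var_ideal k n (nn i).+1 n).

Lemma T_ideal_is_ideal i : is_ideal (T_ideal i).
Proof. exact: gen_ideal_is_ideal. Qed.

Lemma T_mono_in_T_sum m : mono_in_T m -> ideal_sum T_ideal 1 l 'X_[m].
Proof.
move=> /existsP [i /existsP [a /existsP [b /and5P [i0 ia ai ib /andP [ma mb]]]]].
have ab : a != b by apply: contraTneq ai => ->; rewrite -leqNgt (ltnW ib).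
have le_ab : (mnm1 a + mnm1 b <= m)%MM.
  apply/mnm_lepP => x; rewrite mnmDE !mnm1E.
  have [<- | _] := eqVneq a x; first by rewrite eq_sym (negbTE ab) addn0 lt0n.
  by have [<- | _] := eqVneq b x; rewrite ?lt0n.
apply: (@ideal_sum_component _ _ _ _ _ i) => [i' _ | | ].
- exact: gen_ideal0.
- by rewrite i0 ltn_ord.
rewrite -(submK le_ab) !mpolyXD; have [_ _ TM] := T_ideal_is_ideal i; apply: TM.
apply: gen_ideal_gen; exists 'X_a, 'X_b; split; last split => //.
  by apply: gen_ideal_gen; exists a; split => //; lia.
by apply: gen_ideal_gen; exists b; split => //; have := ltn_ord b; lia.
Qed.

Variable lt : rel Mon.

Definition rhs_ideal (J : nat -> Poly -> Prop) :=
  ideal_add (ideal_sum (fun i => gen_ideal (initial_sub lt (J i) (nn i.-1) (nn i))) 1 l.+1)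
            (ideal_sum T_ideal 1 l).

Lemma T_sub_initial i : (1 <= i < l)%N ->
  forall f, T_ideal i f -> initial_ideal lt chain_ideal f.
Proof.
move=> il; apply: ideal_mul_gen_min; first exact: gen_ideal_is_ideal.
move=> _ _ [a [ia ->]] [b [ib ->]].
have nn_pos : (0 < nn i)%N by rewrite -nn0 nn_ltn_mono; lia.
rewrite -mpolyXD; apply: gen_ideal_gen.
exists 'X_[mnm1 a + mnm1 b], (mnm1 a + mnm1 b)%MM.
split; [ | exact: mpolyX_neq0 | exact: lead_mpolyX | by []].
move=> v [j jl Xv]; rewrite mpolyXD mevalM !mevalXU.
have ai : (nn i.-1 <= a < nn i)%N by lia.
have bi : (nn i < b)%N by lia.
by case: (T_pair_point_eq0 il ai bi jl Xv) => ->; rewrite ?mul0r ?mulr0.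
Qed.

Lemma rhs_sub_initial J :
  (forall i, (1 <= i <= l)%N -> forall f, J i f -> in_vars (nn i.-1) (nn i) f -> chain_ideal f) ->
  forall f, rhs_ideal J f -> initial_ideal lt chain_ideal f.
Proof.
move=> J_chain _ [g [h [Jg [Th ->]]]].
have idI := gen_ideal_is_ideal
  (fun p : Poly => exists f m, [/\ chain_ideal f, f != 0, is_lead lt f m & p = 'X_[m]]).
case: (idI) => _ ID _; apply: ID; last first.
  by apply: (ideal_sum_min idI _ Th) => i il; exact: T_sub_initial.
apply: (ideal_sum_min idI _ Jg) => i il; apply: (gen_ideal_in_min idI).
apply: (gen_ideal_in_min idI) => _ [f [m [Jf fi f0 lead ->]]].
by apply: gen_ideal_gen; exists f, m; split => //; apply: (J_chain i) Jf fi; lia.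
Qed.

Lemma rhs_monotone (J J' : nat -> Poly -> Prop) :
  (forall i, (1 <= i <= l)%N -> forall f, J i f -> in_vars (nn i.-1) (nn i) f -> J' i f) ->
  forall f, rhs_ideal J f -> rhs_ideal J' f.
Proof.
move=> JJ' _ [_ [h [[g [Jg ->]] [Th ->]]]].
exists (\sum_(1 <= i < l.+1) g i), h; split => //.
exists g; split => // i il; move: (Jg i il); apply: gen_ideal_in_monotone.
apply: gen_ideal_in_monotone => _ [f [m [Jf fi f0 lead ->]]].
by exists f, m; split => //; apply: (JJ' i) Jf fi; lia.
Qed.

Lemma lead_in_rhs f m : chain_ideal f -> f != 0 -> is_lead lt f m ->
  rhs_ideal (fun i => vanishing_ideal (X i)) 'X_[m].
Proof.
move=> If f0 [fm lead].
have [mT | notT] := boolP (mono_in_T m).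
  by apply: ideal_addr (T_mono_in_T_sum mT); apply: ideal_sum0 => i _; exact: gen_ideal0.
apply: ideal_addl; first by apply: ideal_sum0 => i _; exact: gen_ideal0.
have [jl mj] := block_ofP notT; set j := block_of m in jl mj.
apply: (@ideal_sum_component _ _ _ _ _ j) => [i _ | | ]; [exact: gen_ideal0 | lia | ].
have hm : m \in msupp (block_part j f) by rewrite msupp_mfilter notT eqxx fm.
apply/gen_ideal_gen/gen_ideal_in_gen; first exact: in_vars1.
exists (block_part j f), m; split.
- exact: block_part_vanishing.
- move=> m'; rewrite msupp_mfilter => /andP [/andP [notT' /eqP <-] _].
  by case: (block_ofP notT') => _ /mono_in_blockP.
- by apply: contraTneq hm => ->; rewrite msupp0.
- by split => // m'; rewrite msupp_mfilter => /andP [_ fm']; exact: lead.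
- by [].
Qed.

Lemma rhs_ideal_is_ideal J : is_ideal (rhs_ideal J).
Proof.
by apply: ideal_add_is_ideal; apply: ideal_sum_is_ideal => i _; exact: gen_ideal_is_ideal.
Qed.

Lemma initial_sub_rhs f : initial_ideal lt chain_ideal f ->
  rhs_ideal (fun i => vanishing_ideal (X i)) f.
Proof.
apply: (gen_ideal_in_min (rhs_ideal_is_ideal _)) => _ [g [m [Ig g0 lead ->]]].
exact: lead_in_rhs lead.
Qed.

Lemma chain_initial_ideal :
  same_ideal (initial_ideal lt chain_ideal) (rhs_ideal (fun i => vanishing_ideal (X i))) /\
  same_ideal (initial_ideal lt chain_ideal) (rhs_ideal (fun _ => chain_ideal)).
Proof.
split => f; split.
- exact: initial_sub_rhs.
- by apply: rhs_sub_initial; exact: block_ideal_sub_chain.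
- by move/initial_sub_rhs; apply: rhs_monotone; exact: block_ideal_sub_chain.
- by apply: rhs_sub_initial.
Qed.

End Chain.

Unset Implicit Arguments.

Theorem corollary3p2 (k : closedFieldType) (n l : nat)
  (nn : nat -> nat) (X : nat -> ('I_(n.+1) -> k) -> Prop)
  (lt : rel 'X_{1..n.+1}) :
  [pchar k] =i pred0 ->
  (0 < l)%N ->
  nn 0%N = 0%N -> (forall i, (i < l)%N -> (nn i < nn i.+1)%N) -> nn l = n ->
  (forall i, (1 <= i <= l)%N -> proj_variety (X i)) ->
  (forall i j, (1 <= i <= l)%N -> (1 <= j <= l)%N -> i <> j ->
     ((exists v, X i v /\ X j v) <-> (i = j.+1 \/ j = i.+1))) ->
  (forall i, (1 <= i <= l)%N -> forall v, X i v ->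
     forall x : 'I_(n.+1), ((x < nn i.-1)%N \/ (nn i < x)%N) -> v x = 0) ->
  monomial_order lt ->
  let XX := fun v => exists2 i, (1 <= i <= l)%N & X i v in
  let I_X := vanishing_ideal XX in
  let T := fun i => ideal_mul (@var_ideal k n (nn i.-1) (nn i).-1)
                              (@var_ideal k n (nn i).+1 n) in
  same_ideal (initial_ideal lt I_X)
    (ideal_add
       (ideal_sum (fun i => gen_ideal
                      (initial_sub lt (vanishing_ideal (X i)) (nn i.-1) (nn i))) 1 l.+1)
       (ideal_sum T 1 l))
  /\
  same_ideal (initial_ideal lt I_X)
    (ideal_add
       (ideal_sum (fun i => gen_ideal
                      (initial_sub lt I_X (nn i.-1) (nn i))) 1 l.+1)
       (ideal_sum T 1 l)).
Proof.
move=> _ l_gt0 nn0 nn_incr nnl X_variety X_chain X_support _.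
exact: chain_initial_ideal l_gt0 nn0 nn_incr nnl X_variety X_chain X_support lt.
Qed.
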